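(* Let $R$ be an integral domain and $\star$ a star operation on $R$. Every $\star$-invertible nonzero ideal $I$ of $R$ (i.e. $(II^{-1})^{\star}=R$) is $\star$-basic, and every nonzero ideal $I$ with $(I^2)^{\star}=I^{\star}$ is $\star$-basic.
   Context: Let $R$ be a domain with quotient field $K$ and $\mathcal F(R)$ its set of nonzero fractional ideals. A star operation is a map $I\mapsto I^\star$ on $\mathcal F(R)$ such that for all nonzero $a\in K$ and $I,J\in\mathcal F(R)$: $(aI)^\star=aI^\star$, $R^\star=R$; $I\subseteq I^\star$, and $I\subseteq J$ implies $I^\star\subseteq J^\star$; $I^{\star\star}=I^\star$. Here $I^{-1}=(R:I)=\{x\in K: xI\subseteq R\}$. For a nonzero ideal $I$, an ideal $J\subseteq I$ is a $\star$-reduction of $I$ if $(JI^n)^\star=(I^{n+1})^\star$ for some integer $n\ge 0$; it is a trivial $\star$-reduction if $J^\star=I^\star$. $I$ is $\star$-basic if every $\star$-reduction of $I$ is trivial. *)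

(* The quotient field K of the domain R is mathcomp's
   {fraction R}; subsets of K are Prop-valued predicates K -> Prop. *)
From HB Require Import structures.
From mathcomp Require Import all_boot all_order all_algebra fraction.
Set Implicit Arguments. Unset Strict Implicit. Unset Printing Implicit Defensive.
Import Order.TTheory GRing.Theory.
Local Open Scope ring_scope.

Section StarDefs.
Variable R : idomainType.
Local Notation K := {fraction R}.
Local Notation "x %:F" := (@FracField.tofrac R x).

Definition fset := K -> Prop.

Definition inR : fset := fun x => exists r : R, x = r%:F.

Definition fsubset (A B : fset) : Prop := forall x, A x -> B x.
Definition fseteq (A B : fset) : Prop := forall x, A x <-> B x.

Definition frac_ideal (I : fset) : Prop :=
  [/\ I 0,
      (forall x y, I x -> I y -> I (x + y)),
      (forall r x, inR r -> I x -> I (r * x)),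
      (exists x, I x /\ x != 0) &
      (exists d : R, d != 0 /\ forall x, I x -> inR (d%:F * x))].

Definition nz_ideal (I : fset) : Prop := frac_ideal I /\ fsubset I inR.

Definition fscale (a : K) (I : fset) : fset := fun x => exists y, I y /\ x = a * y.

Definition ideal_prod (I J : fset) : fset :=
  fun x => exists n (f g : 'I_n -> K),
    (forall k, I (f k)) /\ (forall k, J (g k)) /\ x = \sum_(k < n) f k * g k.

Fixpoint ideal_pow (I : fset) (n : nat) : fset :=
  match n with 0 => inR | m.+1 => ideal_prod I (ideal_pow I m) end.

Definition ideal_inv (I : fset) : fset := fun x => forall y, I y -> inR (x * y).

Definition is_star (st : fset -> fset) : Prop :=
  (forall I, frac_ideal I -> frac_ideal (st I)) /\
  [/\ (forall a I, a != 0 -> frac_ideal I -> fseteq (st (fscale a I)) (fscale a (st I))),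
      fseteq (st inR) inR,
      (forall I, frac_ideal I -> fsubset I (st I)),
      (forall I J, frac_ideal I -> frac_ideal J -> fsubset I J -> fsubset (st I) (st J)) &
      (forall I, frac_ideal I -> fseteq (st (st I)) (st I))].

Definition star_reduction (st : fset -> fset) (J I : fset) : Prop :=
  nz_ideal J /\ fsubset J I /\
  exists n : nat, fseteq (st (ideal_prod J (ideal_pow I n))) (st (ideal_pow I n.+1)).

Definition star_basic (st : fset -> fset) (I : fset) : Prop :=
  forall J, star_reduction st J I -> fseteq (st J) (st I).

End StarDefs.

(* A star operation satisfies (A B^star)^star = (A B)^star.  If I is
   star-invertible, multiplying by I^-1 and applying star cancels I, so from
   (J I^n)^star = (I I^n)^star one peels off the factors of I one at a time
   down to J^star = I^star.  If (I^2)^star = I^star, then (I^(n+1))^star = I^star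
   for every n, and a reduction J of I gives
   I^star = (I^(n+1))^star = (J I^n)^star <= J^star <= I^star. *)
From HB Require Import structures.
From mathcomp Require Import all_boot all_order all_algebra fraction.
From Stdlib Require Import FunctionalExtensionality PropExtensionality.
Set Implicit Arguments. Unset Strict Implicit. Unset Printing Implicit Defensive.
Import GRing.Theory.
Local Open Scope ring_scope.

Section FractionalIdeals.
Variable R : idomainType.
Local Notation K := {fraction R}.
Local Notation "x %:F" := (@FracField.tofrac R x).
Implicit Types A B C : fset R.

Lemma fset_ext A B : fseteq A B -> A = B.
Proof.
move=> AB; apply: functional_extensionality => x.
exact: propositional_extensionality.
Qed.

Lemma fsubset_antisym A B : fsubset A B -> fsubset B A -> A = B.
Proof. by move=> AB BA; apply: fset_ext => x; split; [apply: AB | apply: BA]. Qed.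

Lemma fseteq_eq A B : A = B -> fseteq A B.
Proof. by move=> ->. Qed.

Lemma inR0 : @inR R 0.
Proof. by exists 0; rewrite tofrac0. Qed.

Lemma inR1 : @inR R 1.
Proof. by exists 1; rewrite tofrac1. Qed.

Lemma inRD x y : @inR R x -> @inR R y -> @inR R (x + y).
Proof. by move=> [a ->] [b ->]; exists (a + b); rewrite tofracD. Qed.

Lemma inRM x y : @inR R x -> @inR R y -> @inR R (x * y).
Proof. by move=> [a ->] [b ->]; exists (a * b); rewrite tofracM. Qed.

Lemma frac_ideal_inR : frac_ideal (@inR R).
Proof.
split; [exact: inR0 | exact: inRD | exact: inRM | |].
- by exists 1; split; [exact: inR1 | exact: oner_neq0].
- by exists 1; split; [exact: oner_neq0 | move=> x Hx; rewrite tofrac1 mul1r].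
Qed.

Lemma ideal_prod0 A B : ideal_prod A B 0.
Proof.
exists 0%N, (fun _ => 0), (fun _ => 0); split; first by case.
by split; [case | rewrite big_ord0].
Qed.

Lemma ideal_prodD A B x y :
  ideal_prod A B x -> ideal_prod A B y -> ideal_prod A B (x + y).
Proof.
move=> [n1 [f1 [g1 [Hf1 [Hg1 ->]]]]] [n2 [f2 [g2 [Hf2 [Hg2 ->]]]]].
exists (n1 + n2)%N,
  (fun k => match split k with inl i => f1 i | inr j => f2 j end),
  (fun k => match split k with inl i => g1 i | inr j => g2 j end).
split; first by move=> k; case: (split k).
split; first by move=> k; case: (split k).
rewrite big_split_ord /=; congr (_ + _); apply: eq_bigr => i _.
- by have /= -> := @unsplitK n1 n2 (inl i).
- by have /= -> := @unsplitK n1 n2 (inr i).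
Qed.

Lemma ideal_prod_mem A B a b : A a -> B b -> ideal_prod A B (a * b).
Proof.
move=> Aa Bb; exists 1%N, (fun _ => a), (fun _ => b).
by split => //; split => //; rewrite big_ord1.
Qed.

Lemma ideal_prod_ind A B (S : fset R) :
  S 0 -> (forall x y, S x -> S y -> S (x + y)) ->
  (forall a b, A a -> B b -> S (a * b)) -> fsubset (ideal_prod A B) S.
Proof.
move=> S0 SD SM x [n [f [g [Af [Bg ->]]]]].
by apply: (big_ind S) => // k _; apply: SM.
Qed.

Lemma ideal_prodS A A' B B' : fsubset A A' -> fsubset B B' ->
  fsubset (ideal_prod A B) (ideal_prod A' B').
Proof.
move=> AA' BB'; apply: ideal_prod_ind; [exact: ideal_prod0 | exact: ideal_prodD |].
by move=> a b Aa Bb; apply: ideal_prod_mem; [apply: AA' | apply: BB'].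
Qed.

Lemma ideal_prodC A B : ideal_prod A B = ideal_prod B A.
Proof.
have sub C D : fsubset (ideal_prod C D) (ideal_prod D C).
  apply: ideal_prod_ind; [exact: ideal_prod0 | exact: ideal_prodD |].
  by move=> a b Ca Db; rewrite mulrC; apply: ideal_prod_mem.
by apply: fsubset_antisym; apply: sub.
Qed.

Lemma ideal_prodA A B C :
  ideal_prod A (ideal_prod B C) = ideal_prod (ideal_prod A B) C.
Proof.
apply: fsubset_antisym;
  apply: ideal_prod_ind; try exact: ideal_prod0; try exact: ideal_prodD.
- move=> a x Aa; apply: (ideal_prod_ind (S := fun x => _ (a * x))).
  + by rewrite mulr0; apply: ideal_prod0.
  + by move=> y z Hy Hz; rewrite mulrDr; apply: ideal_prodD.
  + move=> b c Bb Cc; rewrite mulrA.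
    by apply: ideal_prod_mem => //; apply: ideal_prod_mem.
- move=> x c /[swap] Cc; apply: (ideal_prod_ind (S := fun x => _ (x * c))).
  + by rewrite mul0r; apply: ideal_prod0.
  + by move=> y z Hy Hz; rewrite mulrDl; apply: ideal_prodD.
  + move=> a b Aa Bb; rewrite -mulrA.
    by apply: ideal_prod_mem => //; apply: ideal_prod_mem.
Qed.

Lemma ideal_prod_inR A : frac_ideal A -> ideal_prod A (@inR R) = A.
Proof.
move=> [A0 AD AM _ _]; apply: fsubset_antisym.
- by apply: ideal_prod_ind => // a r Aa Rr; rewrite mulrC; apply: AM.
- by move=> a Aa; rewrite -[a]mulr1; apply: ideal_prod_mem => //; apply: inR1.
Qed.

Lemma ideal_prod_subl A B :
  frac_ideal A -> fsubset B (@inR R) -> fsubset (ideal_prod A B) A.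
Proof.
move=> fA BR; rewrite -[X in fsubset _ X](ideal_prod_inR fA).
exact: ideal_prodS.
Qed.

Lemma frac_ideal_prod A B :
  frac_ideal A -> frac_ideal B -> frac_ideal (ideal_prod A B).
Proof.
move=> [A0 AD AM [a [Aa a0]] [dA [dA0 HdA]]] [B0 BD BM [b [Bb b0]] [dB [dB0 HdB]]].
split; [exact: ideal_prod0 | exact: ideal_prodD | | |].
- move=> r x Rr; apply: (ideal_prod_ind (S := fun x => _ (r * x))).
  + by rewrite mulr0; apply: ideal_prod0.
  + by move=> y z Hy Hz; rewrite mulrDr; apply: ideal_prodD.
  + by move=> a1 b1 Aa1 Bb1; rewrite mulrA; apply: ideal_prod_mem => //; apply: AM.
- by exists (a * b); split; [apply: ideal_prod_mem | apply: mulf_neq0].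
- exists (dA * dB); split; first exact: mulf_neq0.
  apply: (ideal_prod_ind (S := fun x => inR ((dA * dB)%:F * x))).
  + by rewrite mulr0; apply: inR0.
  + by move=> y z Hy Hz; rewrite mulrDr; apply: inRD.
  + move=> a1 b1 Aa1 Bb1.
    have -> : (dA * dB)%:F * (a1 * b1) = (dA%:F * a1) * (dB%:F * b1).
      by rewrite tofracM -!mulrA; congr (_ * _); rewrite mulrCA.
    by apply: inRM; [apply: HdA | apply: HdB].
Qed.

Lemma frac_ideal_pow A n : frac_ideal A -> frac_ideal (ideal_pow A n).
Proof.
move=> fA; elim: n => [|n IH] /=; first exact: frac_ideal_inR.
exact: frac_ideal_prod.
Qed.

Lemma ideal_pow_subR A n : fsubset A (@inR R) -> fsubset (ideal_pow A n) (@inR R).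
Proof.
move=> AR; elim: n => [|n IH] //=.
apply: ideal_prod_ind; [exact: inR0 | exact: inRD |].
by move=> a b Aa Bb; apply: inRM; [apply: AR | apply: IH].
Qed.

Lemma frac_ideal_scale (a : K) (d : R) B : a != 0 -> d != 0 -> inR (d%:F * a) ->
  frac_ideal B -> frac_ideal (fscale a B).
Proof.
move=> a0 d0 Rda [B0 BD BM [b [Bb b0]] [dB [dB0 HdB]]].
split.
- by exists 0; rewrite mulr0.
- move=> x y [u [Bu ->]] [v [Bv ->]].
  by exists (u + v); rewrite mulrDr; split => //; apply: BD.
- by move=> r x Rr [u [Bu ->]]; exists (r * u); rewrite mulrCA; split => //; apply: BM.
- by exists (a * b); split; [exists b | apply: mulf_neq0].
- exists (d * dB); split; first exact: mulf_neq0.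
  move=> x [u [Bu ->]].
  have -> : (d * dB)%:F * (a * u) = (d%:F * a) * (dB%:F * u).
    by rewrite tofracM -!mulrA; congr (_ * _); rewrite mulrCA.
  by apply: inRM => //; apply: HdB.
Qed.

Lemma frac_ideal_inv (I : fset R) : nz_ideal I -> frac_ideal (ideal_inv I).
Proof.
move=> [[I0 ID IM [x0 [Ix0 x00]] _] IR].
split.
- by move=> y _; rewrite mul0r; apply: inR0.
- by move=> x y Hx Hy z Iz; rewrite mulrDl; apply: inRD; [apply: Hx | apply: Hy].
- by move=> r x Rr Hx z Iz; rewrite -mulrA; apply: inRM => //; apply: Hx.
- by exists 1; split; [move=> y Iy; rewrite mul1r; apply: IR | exact: oner_neq0].
- have [r0 Er0] := IR _ Ix0; exists r0; split.
    by apply: contra x00; rewrite Er0 => /eqP ->; rewrite tofrac0.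
  by move=> x Hx; rewrite -Er0 mulrC; apply: Hx.
Qed.

End FractionalIdeals.

Section StarOperation.
Variables (R : idomainType) (st : fset R -> fset R).
Hypothesis Hst : is_star st.
Implicit Types A B I J : fset R.

Lemma star_frac A : frac_ideal A -> frac_ideal (st A).
Proof. by case: Hst => frac _; apply: frac. Qed.

Lemma star_ext A : frac_ideal A -> fsubset A (st A).
Proof. by case: Hst => _ [_ _ ext _ _]; apply: ext. Qed.

Lemma star_mono A B :
  frac_ideal A -> frac_ideal B -> fsubset A B -> fsubset (st A) (st B).
Proof. by case: Hst => _ [_ _ _ mono _]; apply: mono. Qed.

Lemma star_idem A : frac_ideal A -> st (st A) = st A.
Proof. by case: Hst => _ [_ _ _ _ idem] fA; apply/fset_ext/idem. Qed.

Lemma star_scale a A : a != 0 -> frac_ideal A -> fseteq (st (fscale a A)) (fscale a (st A)).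
Proof. by case: Hst => _ [scale _ _ _ _]; apply: scale. Qed.

Lemma star_prodr A B : frac_ideal A -> frac_ideal B ->
  st (ideal_prod A (st B)) = st (ideal_prod A B).
Proof.
move=> fA fB; have fAB := frac_ideal_prod fA fB.
have fAsB := frac_ideal_prod fA (star_frac fB).
apply: fsubset_antisym; last first.
  by apply: star_mono => //; apply: ideal_prodS => //; apply: star_ext.
rewrite -[X in fsubset _ X](star_idem fAB).
apply: star_mono => //; first exact: star_frac.
have [S0 SD _ _ _] := star_frac fAB.
apply: ideal_prod_ind => // a b Aa sBb.
have [->|a0] := eqVneq a 0; first by rewrite mul0r.
have [_ _ _ _ [dA [dA0 HdA]]] := fA.
have faB := frac_ideal_scale a0 dA0 (HdA _ Aa) fB.
have saBab : st (fscale a B) (a * b) by apply/(star_scale a0 fB); exists b.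
move: saBab; apply: star_mono => // _ [u [Bu ->]].
exact: ideal_prod_mem.
Qed.

Lemma star_prod_cancel I A B : nz_ideal I ->
  st (ideal_prod I (ideal_inv I)) = @inR R ->
  frac_ideal A -> frac_ideal B ->
  st (ideal_prod A I) = st (ideal_prod B I) -> st A = st B.
Proof.
move=> [fI IR] invI.
have fIinv := frac_ideal_inv (conj fI IR).
suff unstar C : frac_ideal C ->
    st C = st (ideal_prod (ideal_inv I) (st (ideal_prod C I))).
  by move=> fA fB ABI; rewrite (unstar _ fA) (unstar _ fB) ABI.
move=> fC; rewrite star_prodr //; last exact: frac_ideal_prod.
rewrite [ideal_prod (ideal_inv I) _]ideal_prodC -ideal_prodA.
by rewrite -star_prodr // ?invI ?ideal_prod_inR //; apply: frac_ideal_prod.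
Qed.

Lemma star_invertible_basic I : nz_ideal I ->
  st (ideal_prod I (ideal_inv I)) = @inR R -> star_basic st I.
Proof.
move=> nzI invI J [[fJ _] [_ [n /fset_ext JIn]]]; apply: fseteq_eq.
have fI := nzI.1.
elim: n JIn => [|n IH] /=; first by rewrite !ideal_prod_inR.
rewrite [ideal_prod I (ideal_pow I n)]ideal_prodC !ideal_prodA => JIn.
apply/IH/(star_prod_cancel nzI invI _ _ JIn); exact/frac_ideal_prod/frac_ideal_pow.
Qed.

Lemma star_pow_idem I n : frac_ideal I ->
  st (ideal_pow I 2) = st I -> st (ideal_pow I n.+1) = st I.
Proof.
move=> fI /=; rewrite ideal_prod_inR // => I2.
elim: n => [|n IH] /=; first by rewrite ideal_prod_inR.
have fIn := frac_ideal_pow n.+1 fI.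
by rewrite -star_prodr // IH star_prodr.
Qed.

Lemma star_idempotent_basic I : nz_ideal I ->
  st (ideal_pow I 2) = st I -> star_basic st I.
Proof.
move=> [fI IR] I2 J [[fJ _] [JI [n /fset_ext JIn]]].
have fIn := frac_ideal_pow n fI.
apply/fseteq_eq/fsubset_antisym; first exact: star_mono.
rewrite -(star_pow_idem n fI I2) -JIn.
apply: star_mono; [exact: frac_ideal_prod | exact: fJ |].
by apply: ideal_prod_subl => //; apply: ideal_pow_subR.
Qed.

End StarOperation.

Theorem lemma1p2 (R : idomainType) (st : fset R -> fset R) (Hst : is_star st)
  (I : fset R) (HI : nz_ideal I) :
  (fseteq (st (ideal_prod I (ideal_inv I))) (@inR R) -> star_basic st I) /\
  (fseteq (st (ideal_pow I 2)) (st I) -> star_basic st I).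
Proof.
split => /fset_ext.
- exact: star_invertible_basic.
- exact: star_idempotent_basic.
Qed.
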